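(* Let $p$ be a prime with $p\equiv5\pmod6$. Then $D^{p-1}(\mathbf{u})=H^2(\mathbf{u})$ for every $\mathbf{u}\in\mathbb{Z}_p^3$, i.e. $D^{p-1}(x_1,x_2,x_3)=(x_3,x_1,x_2)$.
   Context: The Ducci function $D:\mathbb{Z}_p^3\to\mathbb{Z}_p^3$ is $D(x_1,x_2,x_3)=(x_1+x_2,\,x_2+x_3,\,x_3+x_1)$, entries mod $p$. $H(x_1,x_2,x_3)=(x_2,x_3,x_1)$. *)

From mathcomp Require Import all_boot all_algebra.
Set Implicit Arguments. Unset Strict Implicit. Unset Printing Implicit Defensive.
Import GRing.Theory.
Local Open Scope ring_scope.

Definition ducci (p : nat) (u : 'F_p * 'F_p * 'F_p) : 'F_p * 'F_p * 'F_p :=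
  let: (x1, x2, x3) := u in (x1 + x2, x2 + x3, x3 + x1).

Definition Hshift (p : nat) (u : 'F_p * 'F_p * 'F_p) : 'F_p * 'F_p * 'F_p :=
  let: (x1, x2, x3) := u in (x2, x3, x1).

From mathcomp Require Import all_boot all_algebra zify.
Set Implicit Arguments. Unset Strict Implicit. Unset Printing Implicit Defensive.
Import GRing.Theory.
Local Open Scope ring_scope.

(* Viewing a triple as a row vector, D is right multiplication by 1 + Q and H
   by Q, where Q is the cyclic permutation matrix, so Q^3 = 1. In
   characteristic p the Frobenius gives (1 + Q)^p = 1 + Q^p = 1 + Q^2
   = Q^2 (1 + Q) when p = 2 mod 3, and 1 + Q can be cancelled because
   (1 + Q)(1 - Q + Q^2) = 1 + Q^3 = 2 is invertible when p is odd. *)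

Lemma exp1D_pchar (R : nzRingType) (p : nat) (x : R) :
  p \in [pchar R] -> (1 + x) ^+ p = 1 + x ^+ p.
Proof.
move=> pRp; rewrite -!(pFrobenius_autE pRp).
by rewrite (pFrobenius_autD_comm _ (commr_sym (commr1 x))) pFrobenius_aut1.
Qed.

Lemma mul1D_sum_cubes (R : pzRingType) (x : R) :
  (1 + x) * (1 - x + x ^+ 2) = 1 + x ^+ 3.
Proof.
rewrite mulrDl mul1r !mulrDr mulrN mulr1 -expr2 -exprS.
by rewrite addrACA !addrA subrK subrK.
Qed.

Lemma exp1D_pred_cube_root (F : fieldType) (A : lalgType F) (p : nat) (x : A) :
  p \in [pchar F] -> p != 2%N -> p = 2 %[mod 3] -> x ^+ 3 = 1 ->
  (1 + x) ^+ p.-1 = x ^+ 2.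
Proof.
move=> pFp p_neq2 p_mod3 x3.
have pAp : p \in [pchar A] by rewrite pchar_lalg.
have xp : x ^+ p = x ^+ 2.
  by rewrite (divn_eq p 3) p_mod3 exprD mulnC exprM x3 expr1n mul1r.
have expSp : (1 + x) ^+ p.-1 * (1 + x) = x ^+ 2 * (1 + x).
  rewrite -exprSr prednK ?prime_gt0 ?(pcharf_prime pFp) //.
  by rewrite exp1D_pchar // xp mulrDr mulr1 -exprSr x3 addrC.
have two_neq0 : (2%:R : F) != 0.
  by rewrite -(dvdn_pcharf pFp) (dvdn_prime2 (pcharf_prime pFp)).
suff: (2%:R : F) *: (1 + x) ^+ p.-1 = 2%:R *: x ^+ 2 by exact: scalerI.
have two_sum_cubes : 2%:R = 1 + x ^+ 3 :> A by rewrite x3 -mulr2n.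
rewrite !scaler_nat -mulr_natr -[x ^+ 2 *+ 2]mulr_natr two_sum_cubes.
by rewrite -mul1D_sum_cubes !mulrA expSp.
Qed.

Section TripleAsRow.

Variable R : nzRingType.

Definition row_of_triple (u : R * R * R) : 'rV[R]_3 :=
  let: (a, b, c) := u in \row_(j < 3) [:: a; b; c]`_j.

Definition triple_of_row (r : 'rV[R]_3) : R * R * R := (r 0 0, r 0 1, r 0 2).

Lemma row_of_tripleK : cancel row_of_triple triple_of_row.
Proof. by case=> [[a b] c]; rewrite /triple_of_row !mxE. Qed.

Definition shift_mx : 'M[R]_3 := \matrix_(i, j) ((i : nat) == (j.+1 %% 3)%N)%:R.

Lemma sum_ord3 (F : 'I_3 -> R) : \sum_i F i = F 0 + F 1 + F 2.
Proof.
rewrite !big_ord_recr /= big_ord0 add0r.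
by congr (F _ + F _ + F _); apply: val_inj.
Qed.

Lemma triple_of_row_shift (r : 'rV[R]_3) :
  triple_of_row (r *m shift_mx) = (r 0 1, r 0 2, r 0 0).
Proof.
rewrite /triple_of_row !mxE !sum_ord3 !mxE /=.
by rewrite !mulr0 !mulr1 !addr0 !add0r.
Qed.

Lemma shift_mx3 : shift_mx ^+ 3 = 1.
Proof.
rewrite !exprS expr0 mulr1 -[_ * (_ * _)]/(shift_mx *m (shift_mx *m shift_mx)).
apply/matrixP => i j.
(* [/=] would unfold the [%:R] entries past the point where [mulr0] matches. *)
case: i => [[|[|[|i]]] ?] //; case: j => [[|[|[|j]]] ?] //;
  rewrite !mxE !sum_ord3 !mxE !sum_ord3 !mxE; cbn -[GRing.natmul GRing.mul GRing.add];
  by rewrite ?(mulr0n, mulr1n, mulr0, mul0r, mulr1, mul1r, addr0, add0r).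
Qed.

End TripleAsRow.

Arguments shift_mx {R}.

Section DucciAsMatrix.

Variable p : nat.

Lemma ducci_row (r : 'rV['F_p]_3) :
  ducci (triple_of_row r) = triple_of_row (r *m (1 + shift_mx)).
Proof.
move: (triple_of_row_shift r); rewrite /triple_of_row mulmxDr mulmx1 => -[e0 e1 e2].
by congr (_, _, _); rewrite [RHS]mxE ?e0 ?e1 ?e2.
Qed.

Lemma Hshift_row (r : 'rV['F_p]_3) :
  Hshift (triple_of_row r) = triple_of_row (r *m shift_mx).
Proof. by rewrite triple_of_row_shift. Qed.

Lemma iter_ducci_row (n : nat) (r : 'rV['F_p]_3) :
  iter n (@ducci p) (triple_of_row r) = triple_of_row (r *m (1 + shift_mx) ^+ n).
Proof.
elim: n => [|n IHn]; first by rewrite expr0 mulmx1.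
by rewrite iterS IHn ducci_row exprSr mulmxA.
Qed.

End DucciAsMatrix.

Theorem lemma4p3 (p : nat) (hp : prime p) (h5 : p = 5 %[mod 6])
  (u : 'F_p * 'F_p * 'F_p) :
  iter p.-1 (@ducci p) u = Hshift (Hshift u).
Proof.
have p_neq2 : p != 2%N by lia.
have p_mod3 : p = 2 %[mod 3] by lia.
rewrite -[u]row_of_tripleK iter_ducci_row.
rewrite (exp1D_pred_cube_root (pchar_Fp hp) p_neq2 p_mod3 (shift_mx3 _)).
by rewrite !Hshift_row expr2 mulmxA.
Qed.
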